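(* For every instance, the algorithm GC described in the context, given the pseudometric $d$, outputs (for any tie-breaking) a clustering that is $5$-FJR with respect to the centroid loss $\ell_i(C,x)=d(i,x)$.
   Context: Instance: finite nonempty set $\mathcal{N}$ of $n$ agents, finite nonempty set $\mathcal{M}$ of feasible centers, positive integer $k$, pseudometric $d$ on $\mathcal{N}\cup\mathcal{M}$. A clustering is $\mathcal{X}=\{(C_1,x_1),\dots,(C_k,x_k)\}$ with $C_t$ pairwise disjoint (some possibly empty), union $\mathcal{N}$, $x_t\in\mathcal{M}$; $\ell_i(\mathcal{X})=\ell_i(C_t,x_t)$ where $i\in C_t$. For $\alpha\ge1$, $\mathcal{X}$ is $\alpha$-FJR (with respect to losses $\ell_i$) if there is no $S\subseteq\mathcal{N}$ with $|S|\ge n/k$ and $y\in\mathcal{M}$ with $\alpha\,\ell_i(S,y)<\min_{j\in S}\ell_j(\mathcal{X})$ for all $i\in S$. Algorithm GC: maintain a set $U$ of uncaptured agents (initially $\mathcal{N}$) and a parameter $\delta$ increasing continuously from $0$. Whenever there exist an agent $i\in U$ and a set $C\subseteq U$ with $|C|\ge\min(|U|,n/k)$ and $d(i,i')\le\delta$ for all $i'\in C$, form the cluster $(C,x)$ with $x\in\arg\min_{x'\in\mathcal{M}}d(i,x')$ and set $U\leftarrow U\setminus C$. Stop when $U=\emptyset$; output the formed clusters (padded with empty clusters to $k$). *)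

From HB Require Import structures.
From mathcomp Require Import all_boot all_order all_algebra.
Set Implicit Arguments. Unset Strict Implicit. Unset Printing Implicit Defensive.
Import Order.TTheory GRing.Theory Num.Theory.
Local Open Scope ring_scope.

Section GCDefs.
Variables (R : realFieldType) (N M : finType).

Definition pseudometric (d : N + M -> N + M -> R) : Prop :=
  [/\ forall x, d x x = 0,
      forall x y, d x y = d y x &
      forall x y z, d x z <= d x y + d y z].

Variable d : N + M -> N + M -> R.
Variable k : nat.

Definition nk : R := (#|N|%:R) / (k%:R).

Definition gc_feasible (U : {set N}) (delta : R) (i : N) (C : {set N}) : Prop :=
  [/\ i \in U, C \subset U,
      Num.min (#|U|%:R) nk <= (#|C|%:R : R) &
      forall i', i' \in C -> d (inl i) (inl i') <= delta].

Definition gc_some_feasible (U : {set N}) (delta : R) : Prop :=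
  exists i C, gc_feasible U delta i C.

(* gc_run U delta out : starting from uncaptured set U and current parameter
   value delta, some execution of GC (with arbitrary tie-breaking) outputs the
   list of clusters [out] (in order of formation). The parameter increases
   continuously from delta; the next cluster is formed at the first value
   delta' >= delta at which the condition holds. *)
Inductive gc_run : {set N} -> R -> seq ({set N} * M) -> Prop :=
| gc_done delta : gc_run set0 delta [::]
| gc_step U delta delta' i C x out :
    U != set0 ->
    delta <= delta' ->
    (forall delta'', delta <= delta'' -> delta'' < delta' ->
        ~ gc_some_feasible U delta'') ->
    gc_feasible U delta' i C ->
    (forall x', d (inl i) (inr x) <= d (inl i) (inr x')) ->
    gc_run (U :\: C) delta' out ->
    gc_run U delta ((C, x) :: out).

(* The clusters (padded with empty clusters to k) form a clustering:
   at most k clusters, pairwise disjoint, covering N. *)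
Definition is_clustering (out : seq ({set N} * M)) : Prop :=
  [/\ (size out <= k)%N,
      (forall a b, (a < size out)%N -> (b < size out)%N -> a <> b ->
         [disjoint nth set0 (unzip1 out) a & nth set0 (unzip1 out) b])
      & forall i : N, exists2 p, p \in out & i \in p.1].

(* Centroid loss of agent i under the clustering: d(i, x_t) where i ∈ C_t
   (clusters are disjoint, so the first matching cluster is the one). *)
Definition centroid_loss (out : seq ({set N} * M)) (i : N) : R :=
  head 0 [seq d (inl i) (inr p.2) | p <- filter (fun q : {set N} * M => i \in q.1) out].

Definition is_FJR (alpha : R) (out : seq ({set N} * M)) : Prop :=
  ~ exists (S : {set N}) (y : M),
      nk <= (#|S|%:R : R) /\
      (forall i, i \in S -> forall j, j \in S ->
         alpha * d (inl i) (inr y) < centroid_loss out j).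
End GCDefs.

From HB Require Import structures.
From mathcomp Require Import all_boot all_order all_algebra.
From mathcomp Require Import lra.
Import Order.TTheory GRing.Theory Num.Theory.
Local Open Scope ring_scope.
Set Implicit Arguments. Unset Strict Implicit.

(* Let S witness a violation of FJR and let r be the largest distance from an
   agent of S to y, so that any two agents of S are within 2r of each other.
   As long as S is entirely uncaptured, S itself is a feasible cluster at
   parameter 2r, so GC never raises the parameter above 2r.  Since S is
   eventually captured, some j in S lands in a cluster (C, x) formed around an
   agent a with d(a, j) <= 2r, and x is a point of M nearest to a; hence
   d(j, x) <= d(j, a) + d(a, y) <= 2 d(a, j) + d(j, y) <= 5r, contradicting
   5r < loss of j. *)

Lemma first_feasible_le (R : realDomainType) (P : R -> Prop) delta delta' e :
  (forall e', delta <= e' -> e' < delta' -> ~ P e') ->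
  delta <= e -> P e -> delta' <= e.
Proof.
move=> first_feasible le_delta_e Pe; rewrite leNgt; apply/negP => lt_e.
exact: first_feasible e le_delta_e lt_e Pe.
Qed.

Section GCRun.
Variables (R : realFieldType) (N M : finType).
Variables (d : N + M -> N + M -> R) (k : nat).

Local Notation nk := (nk R N k).
Local Notation gc_run := (gc_run d k).

Lemma centroid_loss_cons C x out j :
  centroid_loss d ((C, x) :: out) j =
  if j \in C then d (inl j) (inr x) else centroid_loss d out j.
Proof. by rewrite /centroid_loss /=; case: ifP. Qed.

Lemma gc_run_set0 delta out : gc_run set0 delta out -> out = [::].
Proof.
move E : set0 => U run; case: run E => // ? ? ? ? ? ? ? U_neq0 *.
by subst; rewrite eqxx in U_neq0.
Qed.

Lemma gc_run_cover U delta out : gc_run U delta out ->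
  forall i, i \in U -> exists2 p, p \in out & i \in p.1.
Proof.
elim=> {U delta out} [delta0 i|U delta delta' a C x out _ _ _ _ _ _ IH i iU].
  by rewrite inE.
have [iC | iNC] := boolP (i \in C); first by exists (C, x); rewrite ?inE ?eqxx.
have [p p_out ip] : exists2 p, p \in out & i \in p.1 by apply: IH; rewrite inE iNC.
by exists p; rewrite // inE p_out orbT.
Qed.

Lemma gc_run_cluster_sub U delta out : gc_run U delta out ->
  forall a, (a < size out)%N -> nth set0 (unzip1 out) a \subset U.
Proof.
elim=> {U delta out} [//|U delta delta' i C x out _ _ _ [_ CU _ _] _ _ IH [|a] /= a_lt //].
exact: subset_trans (IH a a_lt) (subsetDl _ _).
Qed.

Lemma gc_run_disjoint U delta out : gc_run U delta out ->
  forall a b, (a < size out)%N -> (b < size out)%N -> a <> b ->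
    [disjoint nth set0 (unzip1 out) a & nth set0 (unzip1 out) b].
Proof.
elim=> {U delta out} [//|U delta delta' i C x out _ _ _ _ _ run IH].
have C_disj b : (b < size out)%N -> [disjoint C & nth set0 (unzip1 out) b].
  move=> b_lt; rewrite disjoint_sym disjoints_subset.
  by apply: subset_trans (gc_run_cluster_sub run b_lt) _; rewrite setDE subsetIr.
move=> [|a] [|b] /= a_lt b_lt neq_ab //.
- exact: C_disj.
- by rewrite disjoint_sym; apply: C_disj.
- by apply: IH => // eq_ab; apply: neq_ab; rewrite eq_ab.
Qed.

Lemma gc_feasible_card_ge U delta i C :
  gc_feasible d k U delta i C -> U :\: C != set0 -> nk <= #|C|%:R.
Proof.
case=> _ CU; rewrite /Num.min; case: ifP => // _ le_U_C.
suff -> : C = U by rewrite setDv eqxx.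
by apply/eqP; rewrite eqEcard CU -(ler_nat R).
Qed.

Lemma gc_run_size U delta out : gc_run U delta out ->
  U != set0 -> ((size out).-1)%:R * nk < #|U|%:R.
Proof.
elim=> {U delta out} [delta0|U delta delta' i C x out U_neq0 _ _ feas _ run IH _].
  by rewrite eqxx.
have CU : C \subset U by case: feas.
have card_U : #|U| = (#|U :\: C| + #|C|)%N by rewrite cardsDS // subnK ?subset_leq_card.
have [rest0 | rest_neq0] := eqVneq (U :\: C) set0.
  by rewrite rest0 in run; rewrite (gc_run_set0 run) mul0r ltr0n card_gt0.
have C_large := gc_feasible_card_ge feas rest_neq0.
have := IH rest_neq0; rewrite /= card_U natrD.
case: (size out) => [|s] /= lt_rest.
  by rewrite mul0r ltr_wpDr // ?ler0n; move: lt_rest; rewrite mul0r.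
by rewrite -natr1 mulrDl mul1r; apply: ltr_leD.
Qed.

Lemma gc_run_size_le delta out :
  (0 < #|N|)%N -> (0 < k)%N -> gc_run [set: N] delta out -> (size out <= k)%N.
Proof.
move=> n_gt0 k_gt0 run; rewrite leqNgt; apply/negP => lt_k_size.
have := gc_run_size run; rewrite -card_gt0 cardsT => /(_ n_gt0); apply/negP.
rewrite -leNgt; apply: le_trans (_ : k%:R * nk <= _).
  by rewrite mulrC divfK // pnatr_eq0 -lt0n.
rewrite ler_wpM2r ?divr_ge0 ?ler0n // ler_nat.
by move: lt_k_size; case: (size out).
Qed.

Lemma gc_run_clustering delta out :
  (0 < #|N|)%N -> (0 < k)%N -> gc_run [set: N] delta out -> is_clustering k out.
Proof.
move=> n_gt0 k_gt0 run; split; first exact: gc_run_size_le run.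
  exact: gc_run_disjoint run.
by move=> i; apply: (gc_run_cover run); rewrite inE.
Qed.

Hypothesis d_pseudo : pseudometric d.

Lemma pseudometric_ge0 p q : 0 <= d p q.
Proof. by have [d0 dC dT] := d_pseudo; have := dT p q p; rewrite d0 (dC q p); lra. Qed.

Lemma ball_dist_le (S : {set N}) y r :
  {in S, forall i, d (inl i) (inr y) <= r} ->
  {in S &, forall i j, d (inl i) (inl j) <= 2 * r}.
Proof.
have [_ dC dT] := d_pseudo => Sy i j iS jS.
have := dT (inl i) (inr y) (inl j); rewrite (dC (inr y)).
by have := Sy i iS; have := Sy j jS; lra.
Qed.

Lemma nearest_center_dist_le p q x y :
  (forall x', d p (inr x) <= d p (inr x')) ->
  d q (inr x) <= 2 * d p q + d q (inr y).
Proof.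
have [_ dC dT] := d_pseudo => x_nearest.
have := dT q p (inr x); have := x_nearest y; have := dT p q (inr y).
by rewrite (dC q p); lra.
Qed.

Lemma gc_run_loss_le (S : {set N}) y r s0 U delta out :
  s0 \in S -> nk <= #|S|%:R -> {in S, forall i, d (inl i) (inr y) <= r} ->
  gc_run U delta out -> S \subset U -> delta <= 2 * r ->
  exists2 j, j \in S & centroid_loss d out j <= 5 * r.
Proof.
move=> s0S S_large Sy.
elim=> {U delta out} [delta0|U delta delta' a C x out _ _ first_feas
  [_ _ _ C_near] x_nearest _ IH] SU delta_le.
  by move: SU; rewrite subset0 => /eqP S0; move: s0S; rewrite S0 inE.
have delta'_le : delta' <= 2 * r.
  apply: (first_feasible_le first_feas delta_le).
  exists s0, S; split => //; first exact: (subsetP SU).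
    by rewrite ge_min S_large orbT.
  by move=> i iS; apply: (ball_dist_le Sy).
have [/exists_inP [j jS jC] | /exists_inPn S_outside] := boolP [exists j in S, j \in C].
  exists j; rewrite // centroid_loss_cons jC.
  apply: le_trans (nearest_center_dist_le (inl j) y x_nearest) _.
  by have := le_trans (C_near j jC) delta'_le; have := Sy j jS; lra.
have [|j jS loss_j] := IH _ delta'_le.
  by apply/subsetP => i iS; rewrite inE S_outside ?(subsetP SU).
by exists j; rewrite // centroid_loss_cons (negbTE (S_outside j jS)).
Qed.

Lemma gc_run_FJR out :
  (0 < #|N|)%N -> (0 < k)%N -> gc_run [set: N] 0 out -> is_FJR d k 5 out.
Proof.
move=> n_gt0 k_gt0 run [S [y [S_large violated]]].
have nk_gt0 : 0 < nk by rewrite divr_gt0 // ltr0n.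
have [s0 s0S] : exists s0, s0 \in S.
  by apply/set0Pn; rewrite -card_gt0 -(ltr_nat R); apply: lt_le_trans S_large.
case: (arg_maxP (fun i => d (inl i) (inr y)) s0S) => m mS m_max.
have r_ge0 : 0 <= 2 * d (inl m) (inr y) by have := pseudometric_ge0 (inl m) (inr y); lra.
have [j jS loss_j] := gc_run_loss_le s0S S_large m_max run (subsetT S) r_ge0.
by have := violated m mS j jS; lra.
Qed.

End GCRun.

Theorem mainTheorem14 (R : realFieldType) (N M : finType)
    (d : N + M -> N + M -> R) (k : nat) :
  (0 < #|N|)%N -> (0 < #|M|)%N -> (0 < k)%N ->
  pseudometric d ->
  forall out : seq ({set N} * M),
    gc_run d k [set: N] 0 out ->
    is_clustering k out /\ is_FJR d k 5 out.
Proof.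
move=> n_gt0 _ k_gt0 d_pseudo out run.
by split; [apply: gc_run_clustering run | apply: gc_run_FJR run].
Qed.
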